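(* Let $n=3$ agents all have budget $1$, let all goods have positive costs, and let $\mathbf X=(X_1,X_2,X_3)$ be a budget-feasible allocation. Let $s_1,s_2,s_3\ge 0$ be such that $v_i(g)\le s_i$ for every agent $i$ and every good $g\in X_1\cup X_2\cup X_3$. Then there exists a budget-feasible allocation $\mathbf Y=(Y_1,Y_2,Y_3)$ that is EFx (with respect to budgets), with $Y_1\cup Y_2\cup Y_3\subseteq X_1\cup X_2\cup X_3$, and a labeling $\{i,j,k\}=\{1,2,3\}$ of the agents such that $$v_i(Y_i)\ge \frac{v_i(X_i)}{9}-\frac{s_i}{3},\qquad v_j(Y_j)\ge \frac{v_j(X_j)}{9}-\frac{2s_j}{3},\qquad v_k(Y_k)\ge\frac{v_k(X_k)}{9}-s_k.$$
   Context: Goods have costs $c(g)>0$, $c(S)=\sum_{g\in S}c(g)$; agents have additive nonnegative valuations. An allocation is a tuple of pairwise disjoint sets of goods (not all goods need be allocated); it is budget-feasible if $c(X_i)\le B_i$ for all $i$. An allocation $\mathbf X$ is EFx (with respect to budgets) if for all agents $i\ne j$, every $S\subseteq X_j$ with $c(S)\le B_i$ and every $g\in S$, $v_i(X_i)\ge v_i(S\setminus\{g\})$. *)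

From mathcomp Require Import all_boot all_order all_algebra.
Set Implicit Arguments. Unset Strict Implicit. Unset Printing Implicit Defensive.
Import Order.TTheory GRing.Theory Num.Theory.
Local Open Scope ring_scope.

Definition setval {R : realFieldType} {G : finType} (f : G -> R) (S : {set G}) : R :=
  \sum_(g in S) f g.

Definition is_allocation {G : finType} {n : nat} (X : 'I_n -> {set G}) : Prop :=
  forall i j : 'I_n, i != j -> [disjoint X i & X j].

Definition budget_feasible {R : realFieldType} {G : finType} {n : nat}
  (c : G -> R) (B : 'I_n -> R) (X : 'I_n -> {set G}) : Prop :=
  forall i, setval c (X i) <= B i.

Definition EFx {R : realFieldType} {G : finType} {n : nat}
  (c : G -> R) (B : 'I_n -> R) (v : 'I_n -> G -> R) (X : 'I_n -> {set G}) : Prop :=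
  forall i j : 'I_n, i != j ->
  forall S : {set G}, S \subset X j -> setval c S <= B i ->
  forall g, g \in S -> setval (v i) (S :\ g) <= setval (v i) (X i).

From mathcomp Require Import all_boot all_order all_algebra.
From mathcomp Require Import lra boolp.
Set Implicit Arguments. Unset Strict Implicit. Unset Printing Implicit Defensive.
Import Order.TTheory GRing.Theory Num.Theory.
Local Open Scope ring_scope.

(* We prove more than claimed: one allocation gives EVERY agent the strongest
   of the three bounds, v_i(Y_i) >= v_i(X_i)/9 - s_i/3.

   Fix n agents sharing a common budget b and a pool W of goods.  Among the
   budget-feasible EFx allocations using only goods of W (the empty allocation
   is one) choose F of maximal utilitarian welfare.  Two facts about F:
   - envy bound: every bundle F_j is affordable for agent i, so by EFx agent i
     values F_j at most v_i(F_i) + s_i (drop one good, worth at most s_i);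
   - no envied free bundle: an unallocated affordable Z ⊆ W is worth at most
     v_i(F_i) to every agent i.  Otherwise an inclusion-minimal set A envied by
     some agent h may replace F_h: minimality of A keeps the allocation EFx,
     and the welfare strictly increases.
   Splitting X_i into its allocated part (worth at most Σ_l v_i(F_l)) and its
   free part yields v_i(X_i) <= v_i(F_i) + n (v_i(F_i) + s_i); for n = 3 this
   gives the bound above, and the bounds with 2 s_i/3 and s_i follow. *)

Lemma exists_argmax (R : realDomainType) (T : finType) (P : T -> Prop)
    (f : T -> R) (x0 : T) :
  P x0 -> exists2 x, P x & forall y, P y -> f y <= f x.
Proof.
move=> Px0.
have [x /asboolP Px xmax] :=
  arg_maxP (P := fun x => `[< P x >]) f (asboolT Px0).
by exists x => // y Py; apply: xmax; apply/asboolP.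
Qed.

Section SetValue.
Variables (R : realFieldType) (G : finType) (f : G -> R).
Hypothesis f_ge0 : forall g, 0 <= f g.

Lemma setval_ge0 (S : {set G}) : 0 <= setval f S.
Proof. exact: sumr_ge0. Qed.

Lemma setval_split (S T : {set G}) :
  setval f S = setval f (S :&: T) + setval f (S :\: T).
Proof. exact: big_setID. Qed.

Lemma setval_subset (S T : {set G}) : S \subset T -> setval f S <= setval f T.
Proof.
by move=> ST; rewrite [leRHS](setval_split T S) (setIidPr ST) lerDl setval_ge0.
Qed.

Lemma setvalD1 (S : {set G}) g :
  g \in S -> setval f S = f g + setval f (S :\ g).
Proof. exact: big_setD1. Qed.

Lemma setvalU (S T : {set G}) : setval f (S :|: T) <= setval f S + setval f T.
Proof.
rewrite (setval_split _ S) (setIidPr (subsetUl S T)) lerD2l.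
by apply: setval_subset; rewrite setDUl setDv set0U subsetDl.
Qed.

Lemma setval_bigcup (n : nat) (F : 'I_n -> {set G}) :
  setval f (\bigcup_(l < n) F l) <= \sum_(l < n) setval f (F l).
Proof.
elim/big_rec2: _ => [|l S x _ IH]; first by rewrite /setval big_set0.
by apply: le_trans (setvalU _ _) _; rewrite lerD2l.
Qed.

End SetValue.

Section Replacement.
Variables (R : realFieldType) (G : finType) (n : nat).
Variables (c : G -> R) (B : 'I_n -> R) (v : 'I_n -> G -> R).

Definition envied (F : 'I_n -> {set G}) (S : {set G}) : bool :=
  [exists h, setval (v h) (F h) < setval (v h) S].

Definition replace (F : 'I_n -> {set G}) (h : 'I_n) (A : {set G}) :
    {ffun 'I_n -> {set G}} :=
  [ffun l => if l == h then A else F l].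

Definition welfare (F : 'I_n -> {set G}) : R :=
  \sum_(l < n) setval (v l) (F l).

Variables (F : 'I_n -> {set G}) (h : 'I_n) (A : {set G}).

Lemma replace_allocation :
  is_allocation F -> (forall l, [disjoint A & F l]) ->
  is_allocation (replace F h A).
Proof.
move=> Falloc AF a a' aa'; rewrite !ffunE.
case: eqP => [ah|_]; case: eqP => [a'h|_] //.
- by move: aa'; rewrite ah a'h eqxx.
- by rewrite disjoint_sym.
- exact: Falloc.
Qed.

Lemma replace_feasible :
  budget_feasible c B F -> setval c A <= B h ->
  budget_feasible c B (replace F h A).
Proof. by move=> Fbud cA l; rewrite ffunE; case: eqP => [->|_]. Qed.

(* Replacing F h by an inclusion-minimal envied set that h herself envies
   preserves EFx: removing a good from a subset of A gives a set that is no
   longer envied, and h only gets happier. *)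
Lemma replace_EFx :
  EFx c B v F -> minset (envied F) A -> setval (v h) (F h) < setval (v h) A ->
  EFx c B v (replace F h A).
Proof.
move=> FEFx /minsetP [_ Amin] hA a a' aa' S; rewrite !ffunE.
case: eqP => [a'h|_]; last first.
  case: eqP => [ah|_]; last exact: FEFx.
  move=> SF cS g gS; rewrite -ah in hA *.
  exact: le_trans (FEFx a a' aa' S SF cS g gS) (ltW hA).
have /negbTE -> : a != h by rewrite -a'h.
move=> SA _ g gS; rewrite leNgt; apply/negP => envy.
have SgA : S :\ g = A.
  apply: Amin; first by apply/existsP; exists a.
  exact: subset_trans (subD1set S g) SA.
by move: (subsetP SA g gS); rewrite -SgA setD11.
Qed.

Lemma replace_welfare :
  setval (v h) (F h) < setval (v h) A ->
  welfare F < welfare (replace F h A).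
Proof.
move=> hA; rewrite /welfare (bigD1 h) //= [ltRHS](bigD1 h) //= ffunE eqxx.
rewrite [X in _ < _ + X](eq_bigr (fun l => setval (v l) (F l))) ?ltrD2r //.
by move=> l /negbTE lh; rewrite ffunE lh.
Qed.

End Replacement.

Lemma EFx_envy_bound (R : realFieldType) (G : finType) (n : nat) (c : G -> R)
    (B : 'I_n -> R) (v : 'I_n -> G -> R) (F : 'I_n -> {set G}) (i j : 'I_n)
    (s : R) :
  (forall g, 0 <= v i g) -> 0 <= s -> EFx c B v F ->
  setval c (F j) <= B i -> (forall g, g \in F j -> v i g <= s) ->
  setval (v i) (F j) <= setval (v i) (F i) + s.
Proof.
move=> v_ge0 s_ge0 FEFx cFj sbound.
have [->|ij] := eqVneq j i; first by rewrite lerDl.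
have [->|[g gF]] := set_0Vmem (F j).
  by rewrite /setval big_set0 addr_ge0 // setval_ge0.
rewrite (setvalD1 _ gF) addrC lerD ?sbound //.
by apply: (FEFx i j) => //; rewrite eq_sym.
Qed.

Section MaxWelfare.
Variables (R : realFieldType) (G : finType) (n : nat).
Variables (c : G -> R) (b : R) (v : 'I_n -> G -> R) (W : {set G}).
Hypotheses (c_ge0 : forall g, 0 <= c g) (v_ge0 : forall i g, 0 <= v i g).
Hypothesis b_ge0 : 0 <= b.

Definition admissible (F : 'I_n -> {set G}) : Prop :=
  [/\ is_allocation F, budget_feasible c (fun _ => b) F,
      EFx c (fun _ => b) v F & \bigcup_(l < n) F l \subset W].

Lemma admissible_empty : admissible [ffun => set0].
Proof.
split.
- by move=> l l' _; rewrite ffunE -setI_eq0 set0I.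
- by move=> l; rewrite ffunE /setval big_set0.
- by move=> l l' _ S; rewrite ffunE subset0 => /eqP -> _ g; rewrite inE.
- by apply/bigcupsP => l _; rewrite ffunE sub0set.
Qed.

Lemma exists_max_welfare :
  exists2 F : {ffun 'I_n -> {set G}}, admissible F &
    forall F' : {ffun 'I_n -> {set G}},
      admissible F' -> welfare v F' <= welfare v F.
Proof.
exact: (@exists_argmax _ _ (fun F : {ffun 'I_n -> {set G}} => admissible F)
  (fun F => welfare v F) _ admissible_empty).
Qed.

Variable F : {ffun 'I_n -> {set G}}.
Hypothesis Fadm : admissible F.
Hypothesis Fmax : forall F' : {ffun 'I_n -> {set G}},
  admissible F' -> welfare v F' <= welfare v F.

Lemma max_welfare_free_bundle (Z : {set G}) (i : 'I_n) :
  Z \subset W -> [disjoint Z & \bigcup_(l < n) F l] -> setval c Z <= b ->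
  setval (v i) Z <= setval (v i) (F i).
Proof.
case: Fadm => Falloc Fbud FEFx FW ZW ZF cZ; rewrite leNgt; apply/negP => iZ.
have [A Amin AZ] := minset_exists (P := envied v F) (C := Z)
  (introT existsP (ex_intro _ i iZ)).
have /existsP [h hA] := minsetp Amin.
have AF l : [disjoint A & F l].
  exact: disjointW AZ (bigcup_sup l isT) ZF.
have cA : setval c A <= b := le_trans (setval_subset c_ge0 AZ) cZ.
have F'adm : admissible (replace F h A).
  split; [exact: replace_allocation | exact: replace_feasible |
          exact: replace_EFx |].
  apply/bigcupsP => l _; rewrite ffunE; case: eqP => _.
    exact: subset_trans AZ ZW.
  exact: subset_trans (bigcup_sup l isT) FW.
by have := Fmax F'adm; rewrite leNgt replace_welfare.
Qed.

Lemma max_welfare_bound (i : 'I_n) (X : {set G}) (s : R) :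
  X \subset W -> setval c X <= b -> 0 <= s ->
  (forall g, g \in W -> v i g <= s) ->
  setval (v i) X <= setval (v i) (F i) + (setval (v i) (F i) + s) *+ n.
Proof.
case: (Fadm) => _ Fbud FEFx FW XW cX s_ge0 sbound.
pose U := \bigcup_(l < n) F l.
have free : setval (v i) (X :\: U) <= setval (v i) (F i).
  apply: max_welfare_free_bundle.
  - exact: subset_trans (subsetDl X U) XW.
  - by rewrite disjoint_subset; apply/subsetP => x; rewrite !inE => /andP [].
  - exact: le_trans (setval_subset c_ge0 (subsetDl X U)) cX.
have allocated : setval (v i) (X :&: U) <= (setval (v i) (F i) + s) *+ n.
  apply: le_trans (setval_subset (v_ge0 i) (subsetIr X U)) _.
  apply: le_trans (setval_bigcup (v_ge0 i) F) _.
  rewrite -[n in _ *+ n]card_ord -sumr_const; apply: ler_sum => j _.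
  apply: (EFx_envy_bound (v_ge0 i) s_ge0 FEFx (Fbud j)) => g gF; apply: sbound.
  by apply: (subsetP FW); apply/bigcupP; exists j.
by rewrite (setval_split _ X U) addrC lerD.
Qed.

End MaxWelfare.

Lemma three_agent_bound (R : realFieldType) (x y s : R) :
  0 <= y -> 0 <= s -> x <= y + (y + s) *+ 3 -> x / 9%:R - s / 3%:R <= y.
Proof. lra. Qed.

Theorem mainTheorem7 (R : realFieldType) (G : finType)
  (c : G -> R) (v : 'I_3 -> G -> R) (X : 'I_3 -> {set G}) (s : 'I_3 -> R) :
  (forall g, 0 < c g) ->
  (forall i g, 0 <= v i g) ->
  is_allocation X ->
  budget_feasible c (fun _ => 1) X ->
  (forall i, 0 <= s i) ->
  (forall i g, g \in \bigcup_(l < 3) X l -> v i g <= s i) ->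
  exists Y : 'I_3 -> {set G},
    [/\ is_allocation Y, budget_feasible c (fun _ => 1) Y, EFx c (fun _ => 1) v Y,
        \bigcup_(l < 3) Y l \subset \bigcup_(l < 3) X l &
        exists i j k : 'I_3,
          [/\ [&& i != j, j != k & i != k],
              setval (v i) (Y i) >= setval (v i) (X i) / 9%:R - s i / 3%:R,
              setval (v j) (Y j) >= setval (v j) (X j) / 9%:R - 2%:R * s j / 3%:R &
              setval (v k) (Y k) >= setval (v k) (X k) / 9%:R - s k]].
Proof.
move=> c_gt0 v_ge0 _ Xbud s_ge0 sbound.
have c_ge0 g : 0 <= c g by apply: ltW.
have [F Fadm Fmax] := exists_max_welfare c v (\bigcup_(l < 3) X l) ler01.
have bound i : setval (v i) (X i) / 9%:R - s i / 3%:R <= setval (v i) (F i).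
  apply: three_agent_bound; rewrite ?setval_ge0 //.
  exact: (max_welfare_bound c_ge0 v_ge0 Fadm Fmax (bigcup_sup i isT) (Xbud i)
    (s_ge0 i) (sbound i)).
case: Fadm => Falloc Fbud FEFx FX.
exists (fun l => F l); split=> //; exists 0, 1, 2%:R; split => //.
- apply: le_trans (bound 1); have := s_ge0 1; lra.
- apply: le_trans (bound 2%:R); have := s_ge0 2%:R; lra.
Qed.
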